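(* Let $M_1,\dots,M_k$ be terms in normal form and let $C$ be a $k$-hole $E$-context. If $\Gamma,\downarrow C[M_1,\dots,M_k]\vdash M$ has a cut-free derivation in $\mathcal S$, then so does $\Gamma,M_1,\dots,M_k\vdash M$.
   Context: Fix names, variables and constructors $\mathsf{pub}$ (unary), $\mathsf{sign},\mathsf{blind},\langle\cdot,\cdot\rangle,\{\cdot\}_\cdot$ (binary). $E$ is the union of AC-convergent equational theories $E_1,\dots,E_n$ with pairwise disjoint signatures, disjoint from the constructors, each with at most one associative-commutative (AC) binary symbol $\oplus_i$; $E$ is presented by a rewrite system $R_E$ terminating and confluent modulo AC; $\Sigma_E$ is its signature. Terms are ground terms over names, the constructors and $\Sigma_E$; $\downarrow N$ is the $R_E$-normal form of $N$ modulo AC. $\equiv$ is equality modulo AC of all $\oplus_i$; $\approx_E$ equality modulo $E$. Guarded term: a name, a variable, or headed by a constructor. $E$-context: term with holes built only from symbols of $\Sigma_E$; $C[M_1,\dots,M_k]$ places $M_i$ in the $i$-th hole. Sequents $\Gamma\vdash M$ have all terms in normal form; $\Gamma,M$ means $\Gamma\cup\{M\}$. A derivation is cut-free if it has no instance of (cut). System $\mathcal S$: (id) $\Gamma\vdash M$ with no premise if $M\approx_E C[M_1,\dots,M_k]$ for an $E$-context $C$ and $M_i\in\Gamma$; (cut) from $\Gamma\vdash M$, $\Gamma,M\vdash T$ infer $\Gamma\vdash T$; ($p_L$) from $\Gamma,\langle M,N\rangle,M,N\vdash T$ infer $\Gamma,\langle M,N\rangle\vdash T$; ($p_R$) from $\Gamma\vdash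 M,\Gamma\vdash N$ infer $\Gamma\vdash\langle M,N\rangle$; ($e_L$) from $\Gamma,\{M\}_K\vdash K$ and $\Gamma,\{M\}_K,M,K\vdash N$ infer $\Gamma,\{M\}_K\vdash N$; ($e_R$) from $\Gamma\vdash M,\Gamma\vdash K$ infer $\Gamma\vdash\{M\}_K$; ($\mathsf{sign}_L$) from $\Gamma,\mathsf{sign}(M,K),\mathsf{pub}(L),M\vdash N$ infer $\Gamma,\mathsf{sign}(M,K),\mathsf{pub}(L)\vdash N$ if $K\equiv L$; ($\mathsf{sign}_R$) from $\Gamma\vdash M,\Gamma\vdash K$ infer $\Gamma\vdash\mathsf{sign}(M,K)$; ($\mathsf{blind}_{L1}$) from $\Gamma,\mathsf{blind}(M,K)\vdash K$ and $\Gamma,\mathsf{blind}(M,K),M,K\vdash N$ infer $\Gamma,\mathsf{blind}(M,K)\vdash N$; ($\mathsf{blind}_R$) from $\Gamma\vdash M,\Gamma\vdash K$ infer $\Gamma\vdash\mathsf{blind}(M,K)$; ($\mathsf{blind}_{L2}$) from $\Gamma,\mathsf{sign}(\mathsf{blind}(M,R),K)\vdash R$ and $\Gamma,\mathsf{sign}(\mathsf{blind}(M,R),K),\mathsf{sign}(M,K),R\vdash N$ infer $\Gamma,\mathsf{sign}(\mathsf{blind}(M,R),K)\vdash N$; ($gs$) from $\Gamma\vdash A$, $\Gamma,A\vdash M$ infer $\Gamma\vdash M$ if $A$ is a guarded subterm of a term in $\Gamma\cup\{M\}$. *)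

From Stdlib Require Import List Relations.
Import ListNotations.
Set Implicit Arguments.

(** Terms.  [F] is the signature Sigma_E of the equational theory; Var is
    used for rewrite rules (open terms); sequents only contain ground terms. *)
Inductive term (F : Type) : Type :=
| Var   (x : nat)
| Name  (a : nat)
| Pub   (t : term F)
| Sign  (m k : term F)
| Blind (m k : term F)
| Pair  (m n : term F)
| Enc   (m k : term F)
| Fn    (f : F) (ts : list (term F)).

Arguments Var {F} x.
Arguments Name {F} a.

Record eqth := {
  sym   : Type;
  arity : sym -> nat;
  isac  : sym -> bool;
  nth   : nat;
  th    : sym -> nat;                 (* f belongs to the signature of E_(th f) *)
  rules : term sym -> term sym -> Prop
}.

Section Theory.
Variable E : eqth.
Notation F := (sym E).
Notation term := (term F).

Inductive subterm : term -> term -> Prop :=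
| st_refl t : subterm t t
| st_pub s t : subterm s t -> subterm s (Pub t)
| st_sign1 s t u : subterm s t -> subterm s (Sign t u)
| st_sign2 s t u : subterm s u -> subterm s (Sign t u)
| st_blind1 s t u : subterm s t -> subterm s (Blind t u)
| st_blind2 s t u : subterm s u -> subterm s (Blind t u)
| st_pair1 s t u : subterm s t -> subterm s (Pair t u)
| st_pair2 s t u : subterm s u -> subterm s (Pair t u)
| st_enc1 s t u : subterm s t -> subterm s (Enc t u)
| st_enc2 s t u : subterm s u -> subterm s (Enc t u)
| st_fn s t f ts : In t ts -> subterm s t -> subterm s (Fn f ts).

Definition wf (t : term) : Prop :=
  forall s, subterm s t ->
    match s with Fn f ts => length ts = arity E f | _ => True end.

Definition ground (t : term) : Prop := forall x, ~ subterm (Var x) t.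

Definition guarded (t : term) : Prop :=
  match t with Fn _ _ => False | _ => True end.

Definition pure (i : nat) (t : term) : Prop :=
  forall s, subterm s t ->
    match s with Var _ => True | Fn f _ => th E f = i | _ => False end.

Fixpoint subst (s : nat -> term) (t : term) : term :=
  match t with
  | Var x => s x
  | Name a => Name a
  | Pub u => Pub (subst s u)
  | Sign u v => Sign (subst s u) (subst s v)
  | Blind u v => Blind (subst s u) (subst s v)
  | Pair u v => Pair (subst s u) (subst s v)
  | Enc u v => Enc (subst s u) (subst s v)
  | Fn f ts => Fn f (map (subst s) ts)
  end.

Inductive cc (R : term -> term -> Prop) : term -> term -> Prop :=
| cc_base s t : R s t -> cc R s t
| cc_pub s t : cc R s t -> cc R (Pub s) (Pub t)
| cc_sign1 s t u : cc R s t -> cc R (Sign s u) (Sign t u)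
| cc_sign2 s t u : cc R s t -> cc R (Sign u s) (Sign u t)
| cc_blind1 s t u : cc R s t -> cc R (Blind s u) (Blind t u)
| cc_blind2 s t u : cc R s t -> cc R (Blind u s) (Blind u t)
| cc_pair1 s t u : cc R s t -> cc R (Pair s u) (Pair t u)
| cc_pair2 s t u : cc R s t -> cc R (Pair u s) (Pair u t)
| cc_enc1 s t u : cc R s t -> cc R (Enc s u) (Enc t u)
| cc_enc2 s t u : cc R s t -> cc R (Enc u s) (Enc u t)
| cc_fn f ls rs s t : cc R s t -> cc R (Fn f (ls ++ s :: rs)) (Fn f (ls ++ t :: rs)).

Inductive ac_ax : term -> term -> Prop :=
| ac_assoc f x y z : isac E f = true ->
    ac_ax (Fn f [Fn f [x; y]; z]) (Fn f [x; Fn f [y; z]])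
| ac_comm f x y : isac E f = true -> ac_ax (Fn f [x; y]) (Fn f [y; x]).

Definition acEq : term -> term -> Prop := clos_refl_sym_trans term (cc ac_ax).

Definition rule_inst (R : term -> term -> Prop) (s t : term) : Prop :=
  exists l r sg, R l r /\ s = subst sg l /\ t = subst sg r.

Definition rstep_mod (R : term -> term -> Prop) (s t : term) : Prop :=
  exists s' t', acEq s s' /\ cc (rule_inst R) s' t' /\ acEq t' t.

Definition rstar R := clos_refl_trans term (rstep_mod R).

Definition normal_in R (t : term) : Prop := ~ exists u, rstep_mod R t u.

Definition terminating_mod R : Prop :=
  forall t, wf t -> Acc (fun u v => rstep_mod R v u) t.

Definition confluent_mod R : Prop :=
  forall s t1 t2, wf s -> rstar R s t1 -> rstar R s t2 ->
    exists u1 u2, rstar R t1 u1 /\ rstar R t2 u2 /\ acEq u1 u2.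

Definition convergent_mod R : Prop := terminating_mod R /\ confluent_mod R.

Definition rules_of (i : nat) (l r : term) : Prop := rules E l r /\ pure i l.

Definition valid_theory : Prop :=
  (forall f, th E f < nth E) /\
  (forall f, isac E f = true -> arity E f = 2) /\
  (forall f g, isac E f = true -> isac E g = true -> th E f = th E g -> f = g) /\
  (forall l r, rules E l r ->
     (exists i, i < nth E /\ pure i l /\ pure i r) /\ wf l /\ wf r /\
     (forall x, l <> Var x) /\
     (forall x, subterm (Var x) r -> subterm (Var x) l)) /\
  (forall i, i < nth E -> convergent_mod (rules_of i)) /\
  convergent_mod (rules E).

Definition normal (t : term) : Prop := normal_in (rules E) t.

Definition is_nf (M N : term) : Prop := rstar (rules E) M N /\ normal N.

Definition eqE : term -> term -> Prop :=
  clos_refl_sym_trans term (cc (fun s t => rule_inst (rules E) s t \/ ac_ax s t)).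

Inductive ctx : Type :=
| Hole
| CFn (f : F) (cs : list ctx).

Fixpoint nholes (c : ctx) : nat :=
  match c with
  | Hole => 1
  | CFn _ cs => (fix go l := match l with [] => 0 | c' :: l' => nholes c' + go l' end) cs
  end.

Fixpoint ctx_wf (c : ctx) : Prop :=
  match c with
  | Hole => True
  | CFn f cs => length cs = arity E f /\
      (fix go l := match l with [] => True | c' :: l' => ctx_wf c' /\ go l' end) cs
  end.

Fixpoint fill_aux (c : ctx) (ms : list term) : term * list term :=
  match c with
  | Hole => match ms with [] => (Name 0, []) | m :: ms' => (m, ms') end
  | CFn f cs =>
      let p := (fix go l ms0 := match l with
                  | [] => ([], ms0)
                  | c' :: l' => let (t, ms1) := fill_aux c' ms0 in
                                let (ts, ms2) := go l' ms1 in (t :: ts, ms2)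
                  end) cs ms in
      (Fn f (fst p), snd p)
  end.

Definition fill (c : ctx) (ms : list term) : term := fst (fill_aux c ms).

Definition okt (t : term) : Prop := wf t /\ ground t /\ normal t.
Definition seq_ok (G : list term) (T : term) : Prop := Forall okt G /\ okt T.

(** The system S.  A set Gamma is represented by a list (only membership
    matters); "Gamma, X |- T" with X in Gamma is rendered by membership.
    [cut_ok = false] forbids (cut). *)
Inductive deriv (cut_ok : bool) : list term -> term -> Prop :=
| r_id G M : seq_ok G M ->
    (exists C ms, ctx_wf C /\ length ms = nholes C /\
       (forall m, In m ms -> In m G) /\ eqE M (fill C ms)) ->
    deriv cut_ok G M
| r_cut G M T : seq_ok G T -> cut_ok = true ->
    deriv cut_ok G M -> deriv cut_ok (M :: G) T -> deriv cut_ok G T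
| r_pL G M N T : seq_ok G T -> In (Pair M N) G ->
    deriv cut_ok (M :: N :: G) T -> deriv cut_ok G T
| r_pR G M N : seq_ok G (Pair M N) ->
    deriv cut_ok G M -> deriv cut_ok G N -> deriv cut_ok G (Pair M N)
| r_eL G M K N : seq_ok G N -> In (Enc M K) G ->
    deriv cut_ok G K -> deriv cut_ok (M :: K :: G) N -> deriv cut_ok G N
| r_eR G M K : seq_ok G (Enc M K) ->
    deriv cut_ok G M -> deriv cut_ok G K -> deriv cut_ok G (Enc M K)
| r_signL G M K L N : seq_ok G N -> In (Sign M K) G -> In (Pub L) G -> acEq K L ->
    deriv cut_ok (M :: G) N -> deriv cut_ok G N
| r_signR G M K : seq_ok G (Sign M K) ->
    deriv cut_ok G M -> deriv cut_ok G K -> deriv cut_ok G (Sign M K)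
| r_blindL1 G M K N : seq_ok G N -> In (Blind M K) G ->
    deriv cut_ok G K -> deriv cut_ok (M :: K :: G) N -> deriv cut_ok G N
| r_blindR G M K : seq_ok G (Blind M K) ->
    deriv cut_ok G M -> deriv cut_ok G K -> deriv cut_ok G (Blind M K)
| r_blindL2 G M R K N : seq_ok G N -> In (Sign (Blind M R) K) G ->
    deriv cut_ok G R -> deriv cut_ok (Sign M K :: R :: G) N -> deriv cut_ok G N
| r_gs G A M : seq_ok G M -> guarded A ->
    (exists t, (In t G \/ t = M) /\ subterm A t) ->
    deriv cut_ok G A -> deriv cut_ok (A :: G) M -> deriv cut_ok G M.

Definition cutfree (G : list term) (M : term) : Prop := deriv false G M.

End Theory.

From Stdlib Require Import List Relations RelationClasses Lia.
Import ListNotations.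

(* Rewriting an E-context filled with normal terms creates no new guarded
   subterms: the rules are pure and their right-hand sides only use variables
   of their left-hand sides, and no rewrite step can happen inside a guarded
   subterm because the filling terms are normal.  So every guarded subterm of
   N = |C[M_1,...,M_k] is AC-equal to a subterm of some M_i, while
   N =_E C[M_1,...,M_k] lets any (id) step that uses N use the M_i instead.
   A cut-free derivation of Gamma, N |- M is then replayed with each hypothesis
   replaced by an AC-equal one: left rules only decompose guarded hypotheses,
   and if N is guarded, one (gs) step first introduces its AC-equal copy among
   the subterms of the M_i. *)

Section Terms.
Variable E : eqth.
Notation term := (term (sym E)).

#[global] Instance acEq_equivalence : Equivalence (acEq E).
Proof. split; intro; [apply rst_refl | apply rst_sym | apply rst_trans]. Qed.

#[global] Instance eqE_equivalence : Equivalence (eqE E).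
Proof. split; intro; [apply rst_refl | apply rst_sym | apply rst_trans]. Qed.

Lemma subterm_trans a b c : subterm E a b -> subterm E b c -> subterm E a c.
Proof. intros Hab Hbc; induction Hbc; eauto using subterm. Qed.

Lemma subterm_Fn_inv A f ts :
  subterm E A (Fn f ts) -> guarded E A -> exists u, In u ts /\ subterm E A u.
Proof. intros H HA; inversion H; subst; [contradiction | eauto]. Qed.

Lemma cc_mono (R R' : term -> term -> Prop) :
  (forall x y, R x y -> R' x y) -> forall x y, cc E R x y -> cc E R' x y.
Proof. intros HR x y H; induction H; eauto using cc. Qed.

Lemma cc_converse (R : term -> term -> Prop) s t :
  cc E R s t -> cc E (fun a b => R b a) t s.
Proof. induction 1; eauto using cc. Qed.

Lemma rst_map (R R' : term -> term -> Prop) (h : term -> term) :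
  (forall x y, R x y -> R' (h x) (h y)) ->
  forall x y, clos_refl_sym_trans term R x y -> clos_refl_sym_trans term R' (h x) (h y).
Proof. intros HR x y H; induction H; eauto using clos_refl_sym_trans. Qed.

Definition context_map (h : term -> term) : Prop :=
  forall (R : term -> term -> Prop) x y, cc E R x y -> cc E R (h x) (h y).

Lemma subterm_context u t : subterm E u t -> exists h, context_map h /\ t = h u.
Proof.
  induction 1; try destruct IHsubterm as [h [Hh ->]];
  [exists (fun x => x) | exists (fun x => Pub (h x))
  | exists (fun x => Sign (h x) u) | exists (fun x => Sign t (h x))
  | exists (fun x => Blind (h x) u) | exists (fun x => Blind t (h x))
  | exists (fun x => Pair (h x) u) | exists (fun x => Pair t (h x))
  | exists (fun x => Enc (h x) u) | exists (fun x => Enc t (h x)) |].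
  all: try (split; [intros R x y Hc; eauto using cc | reflexivity]).
  apply in_split in H as [ls [rs ->]].
  exists (fun x => Fn f (ls ++ h x :: rs));
  split; [intros R x y Hc; eauto using cc | reflexivity].
Qed.

Lemma acEq_context h x y : context_map h -> acEq E x y -> acEq E (h x) (h y).
Proof. intros Hh; apply rst_map; auto. Qed.

Lemma eqE_context h x y : context_map h -> eqE E x y -> eqE E (h x) (h y).
Proof. intros Hh; apply rst_map; auto. Qed.

Lemma acEq_eqE x y : acEq E x y -> eqE E x y.
Proof. apply (rst_map _ _ (fun x => x)); intros; eapply cc_mono; [|eauto]; auto. Qed.

Lemma rstar_eqE x y : rstar E (rules E) x y -> eqE E x y.
Proof.
  induction 1 as [x y [x' [y' [Hx [Hstep Hy]]]]| |]; [|reflexivity|etransitivity; eauto].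
  rewrite (acEq_eqE _ _ Hx), <- (acEq_eqE _ _ Hy).
  apply rst_step; eapply cc_mono; [|eauto]; auto.
Qed.

Lemma normal_subterm t u : normal E t -> subterm E u t -> normal E u.
Proof.
  intros Hn Hs [w [u' [w' [Hu [Hstep Hw]]]]].
  destruct (subterm_context _ _ Hs) as [h [Hh ->]].
  apply Hn; exists (h w'), (h u'), (h w'); split; [apply acEq_context; auto|].
  split; [apply Hh; auto | reflexivity].
Qed.

Lemma okt_subterm t u : okt E t -> subterm E u t -> okt E u.
Proof.
  intros [Hw [Hg Hn]] Hs; split; [|split].
  - intros s Hs'; apply Hw; eapply subterm_trans; eauto.
  - intros x Hx; apply (Hg x); eapply subterm_trans; eauto.
  - eapply normal_subterm; eauto.
Qed.

Lemma normal_acEq t u : normal E t -> acEq E t u -> normal E u.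
Proof.
  intros Hn Htu [w [u' [w' [Hu Hrest]]]]; apply Hn.
  exists w, u', w'; split; [etransitivity|]; eauto.
Qed.

Lemma deriv_seq_ok b G T : deriv E b G T -> seq_ok E G T.
Proof. destruct 1; auto. Qed.

End Terms.

Section AC.
Variable E : eqth.
Notation term := (term (sym E)).

Definition same_head (s t : term) : Prop :=
  match s, t with
  | Var x, Var y => x = y
  | Name a, Name b => a = b
  | Pub a, Pub b => acEq E a b
  | Sign a b, Sign c d | Blind a b, Blind c d | Pair a b, Pair c d | Enc a b, Enc c d =>
      acEq E a c /\ acEq E b d
  | Fn f _, Fn g _ => f = g  (* an AC step may regroup the arguments *)
  | _, _ => False
  end.

Lemma acEq_same_head s t : acEq E s t -> same_head s t.
Proof.
  induction 1 as [s t Hst| s | s t _ IH | s t u _ IH1 _ IH2].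
  - destruct Hst as [s t []| | | | | | | | | |]; simpl; auto;
      try split; first [reflexivity | apply rst_step; auto].
  - destruct s; simpl; try split; reflexivity.
  - destruct s, t; simpl in *; intuition (symmetry; auto).
  - destruct s, t; simpl in IH1; try contradiction; destruct u; simpl in *;
      intuition (subst; auto; etransitivity; eauto).
Qed.

Lemma acEq_guarded s t : acEq E s t -> guarded E s -> guarded E t.
Proof. intros H; apply acEq_same_head in H; destruct s, t; simpl in *; tauto. Qed.

Lemma acEq_Pub_inv a t : acEq E (Pub a) t -> exists x, t = Pub x /\ acEq E a x.
Proof. intros H; apply acEq_same_head in H; destruct t; simpl in H; easy || eauto. Qed.

Ltac binary_inv :=
  let H := fresh in
  intros H; apply acEq_same_head in H;
  match type of H with same_head _ ?t => destruct t end;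
  simpl in H; try contradiction; destruct H; eauto.

Lemma acEq_Sign_inv a b t :
  acEq E (Sign a b) t -> exists x y, t = Sign x y /\ acEq E a x /\ acEq E b y.
Proof. binary_inv. Qed.

Lemma acEq_Blind_inv a b t :
  acEq E (Blind a b) t -> exists x y, t = Blind x y /\ acEq E a x /\ acEq E b y.
Proof. binary_inv. Qed.

Lemma acEq_Pair_inv a b t :
  acEq E (Pair a b) t -> exists x y, t = Pair x y /\ acEq E a x /\ acEq E b y.
Proof. binary_inv. Qed.

Lemma acEq_Enc_inv a b t :
  acEq E (Enc a b) t -> exists x y, t = Enc x y /\ acEq E a x /\ acEq E b y.
Proof. binary_inv. Qed.

Lemma acEq_Sign a b x y : acEq E a x -> acEq E b y -> acEq E (Sign a b) (Sign x y).
Proof.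
  intros Ha Hb; transitivity (Sign x b).
  - apply (acEq_context E (fun z => Sign z b)); auto; intros R u v; apply cc_sign1.
  - apply (acEq_context E (Sign x)); auto; intros R u v; apply cc_sign2.
Qed.

Lemma ac_ax_guarded_subterm s t A :
  ac_ax E s t -> guarded E A -> subterm E A s <-> subterm E A t.
Proof.
  intros Hst HA; destruct Hst; split; intros Hs;
  repeat match goal with
  | H : subterm _ A (Fn _ _) |- _ =>
      apply subterm_Fn_inv in H as (u & Hu & H); [destruct Hu as [<- | [<- | []]] | exact HA]
  end; eauto 8 using subterm, in_eq, in_cons.
Qed.

Lemma cc_guarded_subterm (R : term -> term -> Prop)
  (HR : forall s t A, R s t -> guarded E A -> subterm E A s -> subterm E A t) s t :
  cc E R s t -> forall A, subterm E A s -> guarded E A ->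
  exists A', subterm E A' t /\ clos_refl term (cc E R) A A'.
Proof.
  induction 1 as [s t Hst| | | | | | | | | | f ls rs s t Hst IH]; intros A Hs HA.
  1: exists A; split; [eauto | apply r_refl].
  1-9: inversion Hs; subst;
    solve [ eexists; split; [apply st_refl | apply r_step; eauto using cc]
          | edestruct IHcc as (A' & ? & ?); [eassumption | assumption |];
            exists A'; split; eauto using subterm
          | exists A; split; [eauto using subterm | apply r_refl] ].
  apply subterm_Fn_inv in Hs as (u & Hu & Hs); [| exact HA].
  apply in_app_or in Hu as [Hu | [<- | Hu]].
  - exists A; split; [eapply st_fn; eauto using in_or_app | apply r_refl].
  - destruct (IH A Hs HA) as (A' & ? & ?).
    exists A'; split; [eapply st_fn; eauto using in_or_app, in_eq|]; auto.
  - exists A; split; [eapply st_fn; eauto using in_or_app, in_cons | apply r_refl].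
Qed.

Definition guarded_subterms_transfer (t t' : term) : Prop :=
  forall A, subterm E A t -> guarded E A -> exists A', subterm E A' t' /\ acEq E A A'.

Lemma guarded_subterms_transfer_trans t u v :
  guarded_subterms_transfer t u -> guarded_subterms_transfer u v ->
  guarded_subterms_transfer t v.
Proof.
  intros Htu Huv A HA Hg; destruct (Htu A HA Hg) as (A1 & HA1 & HAA1).
  destruct (Huv A1 HA1) as (A2 & HA2 & HA12); [eapply acEq_guarded; eauto|].
  exists A2; split; [|etransitivity]; eauto.
Qed.

Lemma acEq_guarded_subterms t t' : acEq E t t' -> guarded_subterms_transfer t t'.
Proof.
  intros H.
  enough (guarded_subterms_transfer t t' /\ guarded_subterms_transfer t' t) by tauto.
  induction H as [s t Hst| s | s t _ [IH1 IH2] | s t u _ [IH1 IH2] _ [IH3 IH4]].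
  - split; intros A Hs HA.
    + destruct (cc_guarded_subterm (ac_ax E)
        (fun s t A Hst HA => proj1 (ac_ax_guarded_subterm s t A Hst HA)) _ _ Hst A Hs HA)
        as (A' & ? & HAA').
      exists A'; split; auto; destruct HAA'; [apply rst_step; auto | reflexivity].
    + apply cc_converse in Hst.
      destruct (cc_guarded_subterm (fun a b => ac_ax E b a)
        (fun s t A Hts HA => proj2 (ac_ax_guarded_subterm t s A Hts HA)) _ _ Hst A Hs HA)
        as (A' & ? & HAA').
      exists A'; split; auto; destruct HAA' as [? HAA' |]; [|reflexivity].
      apply cc_converse in HAA'; symmetry; apply rst_step.
      eapply cc_mono; [|exact HAA']; auto.
  - split; intros A Hs HA; exists A; split; auto; reflexivity.
  - auto.
  - split; eapply guarded_subterms_transfer_trans; eauto.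
Qed.

End AC.

Section Contexts.
Variable E : eqth.
Notation term := (term (sym E)).
Notation ctx := (ctx E).

Fixpoint fill_list (cs : list ctx) (ms : list term) : list term * list term :=
  match cs with
  | [] => ([], ms)
  | c :: cs' => let (t, ms1) := fill_aux c ms in
                let (ts, ms2) := fill_list cs' ms1 in (t :: ts, ms2)
  end.

Fixpoint nholes_list (cs : list ctx) : nat :=
  match cs with [] => 0 | c :: cs' => nholes c + nholes_list cs' end.

Fixpoint ctx_list_wf (cs : list ctx) : Prop :=
  match cs with [] => True | c :: cs' => ctx_wf c /\ ctx_list_wf cs' end.

Lemma fill_aux_CFn f cs ms :
  fill_aux (CFn f cs) ms = (Fn f (fst (fill_list cs ms)), snd (fill_list cs ms)).
Proof. reflexivity. Qed.

Lemma fill_CFn f cs ms : fill (CFn f cs) ms = Fn f (fst (fill_list cs ms)).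
Proof. reflexivity. Qed.

Lemma nholes_CFn f cs : nholes (CFn f cs) = nholes_list cs.
Proof. reflexivity. Qed.

Lemma ctx_wf_CFn f cs : ctx_wf (CFn f cs) = (length cs = arity E f /\ ctx_list_wf cs).
Proof. reflexivity. Qed.

Fixpoint ctx_nested_ind (P : ctx -> Prop) (HHole : P (Hole E))
  (HCFn : forall f cs, Forall P cs -> P (CFn f cs)) (c : ctx) : P c :=
  match c with
  | Hole _ => HHole
  | CFn f cs =>
      HCFn f cs ((fix go (l : list ctx) : Forall P l :=
        match l with
        | [] => Forall_nil _
        | c' :: l' => Forall_cons _ (ctx_nested_ind P HHole HCFn c') (go l')
        end) cs)
  end.

Lemma split_at_length (ms : list term) n :
  n <= length ms -> exists m1 m2, ms = m1 ++ m2 /\ length m1 = n.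
Proof.
  intros H; exists (firstn n ms), (skipn n ms).
  split; [symmetry; apply firstn_skipn | apply firstn_length_le; auto].
Qed.

Lemma fill_aux_app (c : ctx) (ms rest : list term) :
  length ms = nholes c -> fill_aux c (ms ++ rest) = (fst (fill_aux c ms), rest).
Proof.
  revert ms rest; induction c as [| f cs Hcs] using ctx_nested_ind; intros ms rest Hl.
  - destruct ms as [| m [| ? ?]]; simpl in Hl; try discriminate; reflexivity.
  - rewrite !fill_aux_CFn; rewrite nholes_CFn in Hl.
    enough (Hlist : forall ms, length ms = nholes_list cs ->
              fill_list cs (ms ++ rest) = (fst (fill_list cs ms), rest))
      by (rewrite Hlist; auto).
    clear ms Hl; induction Hcs as [| c cs Hc Hcs IH]; intros ms Hl.
    + destruct ms; simpl in Hl; try discriminate; reflexivity.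
    + simpl in Hl; destruct (split_at_length ms (nholes c)) as [m1 [m2 [-> Hm1]]]; [lia|].
      rewrite length_app in Hl; simpl.
      rewrite <- app_assoc, (Hc m1 (m2 ++ rest) Hm1), (Hc m1 m2 Hm1), (IH m2) by lia.
      destruct (fill_list cs m2); reflexivity.
Qed.

Lemma fill_closed (Q : term -> Prop)
  (HQ : forall f ts, length ts = arity E f -> (forall t, In t ts -> Q t) -> Q (Fn f ts))
  (c : ctx) (ms : list term) :
  ctx_wf c -> length ms = nholes c -> (forall m, In m ms -> Q m) -> Q (fill c ms).
Proof.
  revert ms; induction c as [| f cs Hcs] using ctx_nested_ind; intros ms Hw Hl Hms.
  - destruct ms as [| m [| ? ?]]; simpl in Hl; try discriminate; apply Hms; simpl; auto.
  - rewrite ctx_wf_CFn in Hw; destruct Hw as [Harity Hw].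
    rewrite nholes_CFn in Hl; rewrite fill_CFn.
    enough (Hlist : forall ms, length ms = nholes_list cs -> (forall m, In m ms -> Q m) ->
      length (fst (fill_list cs ms)) = length cs /\
      forall t, In t (fst (fill_list cs ms)) -> Q t).
    { destruct (Hlist ms Hl Hms) as [Hlen HQts]; apply HQ; auto; congruence. }
    clear ms Hl Hms Harity; induction Hcs as [| c cs Hc Hcs IH]; intros ms Hl Hms.
    + split; [reflexivity | intros t []].
    + simpl in Hl; destruct Hw as [Hwc Hw].
      destruct (split_at_length ms (nholes c)) as [m1 [m2 [-> Hm1]]]; [lia|].
      rewrite length_app in Hl; simpl; rewrite (fill_aux_app c m1 m2 Hm1).
      destruct (IH Hw m2) as [IH1 IH2]; [lia | intros; apply Hms, in_or_app; auto |].
      destruct (fill_list cs m2) as [ts r]; simpl in *.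
      split; [congruence|].
      intros t [<- | Ht]; auto.
      apply Hc; auto; intros; apply Hms, in_or_app; auto.
Qed.

Definition id_derivable (D : list term) (T : term) : Prop :=
  exists C ms, ctx_wf C /\ length ms = nholes C /\ (forall m, In m ms -> In m D) /\
    eqE E T (fill C ms).

Lemma id_derivable_In D m : In m D -> id_derivable D m.
Proof.
  intros H; exists (Hole E), [m]; repeat split.
  - intros m' [<- | []]; auto.
  - reflexivity.
Qed.

Lemma id_derivable_eqE D s t : id_derivable D s -> eqE E s t -> id_derivable D t.
Proof.
  intros (C & ms & HC & Hl & Hms & Hs) Hst; exists C, ms; repeat split; auto.
  rewrite <- Hst; auto.
Qed.

Lemma id_derivable_incl D D' t : incl D D' -> id_derivable D t -> id_derivable D' t.
Proof. intros HD (C & ms & HC & Hl & Hms & Ht); exists C, ms; repeat split; auto. Qed.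

Lemma eqE_Fn_args f pre ts us :
  Forall2 (eqE E) ts us -> eqE E (Fn f (pre ++ ts)) (Fn f (pre ++ us)).
Proof.
  intros H; revert pre; induction H as [| t u ts us Htu _ IH]; intros pre; [reflexivity|].
  transitivity (Fn f (pre ++ u :: ts)).
  - apply (eqE_context E (fun z => Fn f (pre ++ z :: ts))); auto.
    intros R a b; apply cc_fn.
  - specialize (IH (pre ++ [u])); rewrite <- !app_assoc in IH; exact IH.
Qed.

Lemma id_derivable_list D ts : (forall t, In t ts -> id_derivable D t) ->
  exists cs ms, length cs = length ts /\ ctx_list_wf cs /\ length ms = nholes_list cs /\
    (forall m, In m ms -> In m D) /\ Forall2 (eqE E) ts (fst (fill_list cs ms)).
Proof.
  induction ts as [| t ts IH]; intros H.
  - exists [], []; repeat split; auto; intros m [].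
  - destruct (H t) as (c & ms & Hc & Hl & Hms & Ht); [simpl; auto|].
    destruct IH as (cs & ms' & Hlen & Hcs & Hl' & Hms' & Hts); [intros; apply H; simpl; auto|].
    exists (c :: cs), (ms ++ ms'); simpl; repeat split; auto.
    + rewrite length_app; lia.
    + intros m Hm; apply in_app_or in Hm as [|]; auto.
    + rewrite (fill_aux_app c ms ms' Hl); destruct (fill_list cs ms'); simpl in *.
      constructor; auto.
Qed.

Lemma id_derivable_Fn D f ts : length ts = arity E f ->
  (forall t, In t ts -> id_derivable D t) -> id_derivable D (Fn f ts).
Proof.
  intros Harity H.
  destruct (id_derivable_list D ts H) as (cs & ms & Hlen & Hcs & Hl & Hms & Hts).
  exists (CFn f cs), ms; rewrite ctx_wf_CFn, nholes_CFn, fill_CFn; repeat split; auto.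
  - congruence.
  - apply (eqE_Fn_args f []); auto.
Qed.

Lemma id_derivable_fill D (c : ctx) ms : ctx_wf c -> length ms = nholes c ->
  (forall m, In m ms -> id_derivable D m) -> id_derivable D (fill c ms).
Proof. apply fill_closed, id_derivable_Fn. Qed.

End Contexts.

Section Coverage.
Variable E : eqth.
Notation term := (term (sym E)).

Definition gsubterms_in (D : list term) (t : term) : Prop :=
  forall A, subterm E A t -> guarded E A ->
    exists m A', In m D /\ subterm E A' m /\ acEq E A A'.

Lemma gsubterms_in_incl D D' t : incl D D' -> gsubterms_in D t -> gsubterms_in D' t.
Proof.
  intros HD Ht A HA Hg; destruct (Ht A HA Hg) as (m & A' & ? & ? & ?).
  exists m, A'; auto.
Qed.

Lemma gsubterms_in_acEq D s t : acEq E s t -> gsubterms_in D s -> gsubterms_in D t.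
Proof.
  intros Hst Hs A HA Hg.
  destruct (acEq_guarded_subterms E t s (symmetry Hst) A HA Hg) as (A1 & HA1 & HAA1).
  destruct (Hs A1 HA1) as (m & A' & ? & ? & ?); [eapply acEq_guarded; eauto|].
  exists m, A'; repeat split; auto; etransitivity; eauto.
Qed.

Lemma gsubterms_in_member D s t : In t D -> acEq E s t -> gsubterms_in D s.
Proof.
  intros Ht Hst; apply (gsubterms_in_acEq D t s); [symmetry; auto|].
  intros A HA _; exists t, A; repeat split; auto; reflexivity.
Qed.

Lemma gsubterms_in_fill (C : ctx E) ms :
  ctx_wf C -> length ms = nholes C -> gsubterms_in ms (fill C ms).
Proof.
  intros HC Hl; apply fill_closed; auto.
  - intros f ts _ Hts A HA Hg.
    apply subterm_Fn_inv in HA as (u & Hu & HA); auto.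
    eapply Hts; eauto.
  - intros m Hm; apply gsubterms_in_member with m; auto; reflexivity.
Qed.

Lemma subterm_subst sg s t : subterm E s t -> subterm E (subst E sg s) (subst E sg t).
Proof. induction 1; simpl; eauto using subterm, in_map. Qed.

Lemma pure_subterm i s t : pure E i t -> subterm E s t -> pure E i s.
Proof. intros Ht Hs s' Hs'; apply Ht; eapply subterm_trans; eauto. Qed.

Lemma pure_subst_guarded_subterm i sg r A :
  pure E i r -> subterm E A (subst E sg r) -> guarded E A ->
  exists x, subterm E (Var x) r /\ subterm E A (sg x).
Proof.
  intros Hr Hs; remember (subst E sg r) as u eqn:Hu; revert r Hr Hu.
  induction Hs as [| | | | | | | | | | s t f ts Hin Hs IH]; intros r Hr Hu HA;
    destruct r as [x | | | | | | | g rs]; simpl in Hu; try discriminate;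
    try (exists x; split; [apply st_refl | rewrite <- Hu; eauto using subterm]; fail);
    try (specialize (Hr _ (st_refl _ _)); contradiction).
  - subst; contradiction.
  - injection Hu as -> ->; apply in_map_iff in Hin as (r & <- & Hr_in).
    destruct (IH r) as (x & ? & ?); eauto using pure_subterm, subterm.
Qed.

Section Rewriting.
Hypothesis rules_shape : forall l r, rules E l r ->
  (exists i, pure E i r) /\ (forall x, subterm E (Var x) r -> subterm E (Var x) l).

Variable D : list term.
Hypothesis D_normal : forall m, In m D -> normal E m.

Lemma guarded_irreducible u v :
  gsubterms_in D u -> guarded E u -> ~ cc E (rule_inst E (rules E)) u v.
Proof.
  intros Hu Hg Huv.
  destruct (Hu u (st_refl _ _) Hg) as (m & A' & Hm & HA' & Hu').
  destruct (subterm_context E _ _ HA') as [h [Hh ->]].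
  apply (D_normal _ Hm); exists (h v), (h u), (h v).
  split; [apply acEq_context; auto; symmetry; auto|].
  split; [apply Hh; auto | reflexivity].
Qed.

Lemma gsubterms_in_step s t :
  cc E (rule_inst E (rules E)) s t -> gsubterms_in D s -> gsubterms_in D t.
Proof.
  intros Hst; induction Hst as [s t Hst| | | | | | | | | | f ls rs s t Hst IH]; intros Hs;
    try (exfalso; eapply (guarded_irreducible _ _ Hs I); eauto using cc; fail).
  - destruct Hst as (l & r & sg & Hlr & -> & ->).
    destruct (rules_shape l r Hlr) as [[i Hr] Hvars].
    intros A HA Hg.
    destruct (pure_subst_guarded_subterm i sg r A Hr HA Hg) as (x & Hx & HAx).
    apply Hs; auto; eapply subterm_trans; [exact HAx|].
    apply (subterm_subst sg (Var x) l); auto.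
  - intros A HA Hg; apply subterm_Fn_inv in HA as (u & Hu & HA); auto.
    apply in_app_or in Hu as [Hu | [<- | Hu]].
    + apply Hs; auto; apply st_fn with u; auto using in_or_app.
    + apply IH; auto; intros B HB HgB.
      apply Hs; auto; apply st_fn with s; auto using in_or_app, in_eq.
    + apply Hs; auto; apply st_fn with u; auto using in_or_app, in_cons.
Qed.

Lemma gsubterms_in_rstar s t : rstar E (rules E) s t -> gsubterms_in D s -> gsubterms_in D t.
Proof.
  induction 1 as [s t (s' & t' & Hs & Hstep & Ht) | |]; auto.
  intros H; eapply gsubterms_in_acEq; [exact Ht|].
  eapply gsubterms_in_step; [exact Hstep|]; eapply gsubterms_in_acEq; eauto.
Qed.

End Rewriting.
End Coverage.

Section Simulation.
Variable E : eqth.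
Notation term := (term (sym E)).

(* The three clauses are what the left rules, (id) and (gs) respectively need
   in order to replay a step that uses the hypothesis t with the hypotheses D. *)
Definition represents (D : list term) (t : term) : Prop :=
  (guarded E t -> exists t', In t' D /\ acEq E t t') /\
  id_derivable E D t /\ gsubterms_in E D t.

Lemma represents_incl D D' t : incl D D' -> represents D t -> represents D' t.
Proof.
  intros HD (Hg & Hid & Hsub); repeat split.
  - intros Ht; destruct (Hg Ht) as (t' & ? & ?); exists t'; auto.
  - eapply id_derivable_incl; eauto.
  - eapply gsubterms_in_incl; eauto.
Qed.

Lemma represents_member D t t' : In t' D -> acEq E t t' -> represents D t.
Proof.
  intros Ht' Htt'; repeat split.
  - exists t'; auto.
  - apply id_derivable_eqE with t'; [apply id_derivable_In; auto|].
    symmetry; apply acEq_eqE; auto.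
  - eapply gsubterms_in_member; eauto.
Qed.

Lemma represents_cons G D a a' : (forall t, In t G -> represents D t) ->
  acEq E a a' -> forall t, In t (a :: G) -> represents (a' :: D) t.
Proof.
  intros HG Ha t [<- | Ht].
  - apply represents_member with a'; simpl; auto.
  - apply represents_incl with D; auto; apply incl_tl, incl_refl.
Qed.

Lemma okt_Sign x y : okt E x -> okt E y -> normal E (Sign x y) -> okt E (Sign x y).
Proof.
  intros [Wx [Gx _]] [Wy [Gy _]] Hn; split; [|split; auto].
  - intros s Hs; inversion Hs; subst; [simpl; auto | apply Wx; auto | apply Wy; auto].
  - intros v Hv; inversion Hv; subst; [eapply Gx | eapply Gy]; eauto.
Qed.

Definition simulable (G : list term) (T : term) : Prop :=
  forall D T', acEq E T T' -> okt E T' -> Forall (okt E) D ->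
    (forall t, In t G -> represents D t) -> deriv E false D T'.

Lemma simulable_id G T : id_derivable E G T -> simulable G T.
Proof.
  intros (C & ms & HC & Hl & Hms & HTC) D T' HT HT' HD HG.
  apply r_id; [split; auto|].
  apply id_derivable_eqE with (fill C ms); [|rewrite <- HTC; apply acEq_eqE; auto].
  apply id_derivable_fill; auto; intros m Hm; apply (HG m (Hms m Hm)).
Qed.

Lemma represents_guarded_subterm G D T T' A t :
  Forall (okt E) D -> okt E T' -> acEq E T T' -> (forall t, In t G -> represents D t) ->
  In t G \/ t = T -> subterm E A t -> guarded E A ->
  exists A', acEq E A A' /\ okt E A' /\ exists t', (In t' D \/ t' = T') /\ subterm E A' t'.
Proof.
  intros HD HT' HT HG Ht HAt HA; rewrite Forall_forall in HD.
  destruct Ht as [Ht | ->].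
  - destruct (proj2 (proj2 (HG t Ht)) A HAt HA) as (m & A' & Hm & ? & ?).
    exists A'; split; [| split; [eauto using okt_subterm | exists m; auto]]; auto.
  - destruct (acEq_guarded_subterms E T T' HT A HAt HA) as (A' & ? & ?).
    exists A'; split; [| split; [eauto using okt_subterm | exists T'; auto]]; auto.
Qed.

Lemma simulable_gs G A T : guarded E A ->
  (exists t, (In t G \/ t = T) /\ subterm E A t) ->
  simulable G A -> simulable (A :: G) T -> simulable G T.
Proof.
  intros HA (t & Ht & HAt) IH1 IH2 D T' HT HT' HD HG.
  destruct (represents_guarded_subterm G D T T' A t) as (A' & HAA' & HA' & HA'D); auto.
  apply r_gs with A'; [split; auto | eapply acEq_guarded; eauto | auto | |].
  - apply IH1; auto.
  - apply IH2; auto; apply represents_cons; auto.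
Qed.

Ltac okt_sub H := eapply okt_subterm; [exact H | eauto 6 using subterm].

Lemma simulable_blindL2 G M R K N : In (Sign (Blind M R) K) G -> normal E (Sign M K) ->
  simulable G R -> simulable (Sign M K :: R :: G) N -> simulable G N.
Proof.
  intros Hin HnMK IH1 IH2 D T' HT HT' HD HG; assert (HDok := proj1 (Forall_forall _ _) HD).
  destruct (proj1 (HG _ Hin) I) as (t' & Ht' & Hac).
  apply acEq_Sign_inv in Hac as (b & y & -> & Hb & Hy).
  apply acEq_Blind_inv in Hb as (x & z & -> & Hx & Hz).
  assert (okt E x) by okt_sub (HDok _ Ht').
  assert (okt E y) by okt_sub (HDok _ Ht').
  assert (okt E z) by okt_sub (HDok _ Ht').
  apply r_blindL2 with x z y; [split; auto | auto | apply IH1; auto |].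
  apply IH2; auto.
  - apply Forall_cons; [| apply Forall_cons; auto].
    apply okt_Sign; auto; eapply normal_acEq; [exact HnMK | apply acEq_Sign; auto].
  - apply represents_cons; [apply represents_cons|]; auto using acEq_Sign.
Qed.

Lemma cutfree_simulable G T : deriv E false G T -> simulable G T.
Proof.
  induction 1 as [G T _ Hid | | G M N T _ Hin _ IH | G M N _ _ IH1 _ IH2
    | G M K N _ Hin _ IH1 _ IH2 | G M K _ _ IH1 _ IH2
    | G M K L N _ Hin HinP HKL _ IH | G M K _ _ IH1 _ IH2
    | G M K N _ Hin _ IH1 _ IH2 | G M K _ _ IH1 _ IH2
    | G M R K N _ Hin _ IH1 HdR IH2 | G A T _ HA Hsub _ IH1 _ IH2].
  1: apply simulable_id; auto.
  2-9: intros D T' HT HT' HD HG; assert (HDok := proj1 (Forall_forall _ _) HD).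
  - discriminate.
  - destruct (proj1 (HG _ Hin) I) as (t' & Ht' & Hac).
    apply acEq_Pair_inv in Hac as (x & y & -> & Hx & Hy).
    apply r_pL with x y; [split; auto | auto |].
    apply IH; auto.
    + repeat constructor; auto; okt_sub (HDok _ Ht').
    + apply represents_cons; [apply represents_cons|]; auto.
  - apply acEq_Pair_inv in HT as (x & y & -> & Hx & Hy).
    apply r_pR; [split; auto | apply IH1 | apply IH2]; auto; okt_sub HT'.
  - destruct (proj1 (HG _ Hin) I) as (t' & Ht' & Hac).
    apply acEq_Enc_inv in Hac as (x & y & -> & Hx & Hy).
    assert (okt E x) by okt_sub (HDok _ Ht').
    assert (okt E y) by okt_sub (HDok _ Ht').
    apply r_eL with x y; [split; auto | auto | apply IH1; auto |].
    apply IH2; auto; apply represents_cons; [apply represents_cons|]; auto.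
  - apply acEq_Enc_inv in HT as (x & y & -> & Hx & Hy).
    apply r_eR; [split; auto | apply IH1 | apply IH2]; auto; okt_sub HT'.
  - destruct (proj1 (HG _ Hin) I) as (t' & Ht' & Hac).
    apply acEq_Sign_inv in Hac as (x & y & -> & Hx & Hy).
    destruct (proj1 (HG _ HinP) I) as (p & Hp & Hac).
    apply acEq_Pub_inv in Hac as (z & -> & Hz).
    apply r_signL with x y z; [split; auto | auto | auto | |].
    + rewrite <- Hy, <- Hz; auto.
    + apply IH; auto; [constructor; auto; okt_sub (HDok _ Ht') | apply represents_cons; auto].
  - apply acEq_Sign_inv in HT as (x & y & -> & Hx & Hy).
    apply r_signR; [split; auto | apply IH1 | apply IH2]; auto; okt_sub HT'.
  - destruct (proj1 (HG _ Hin) I) as (t' & Ht' & Hac).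
    apply acEq_Blind_inv in Hac as (x & y & -> & Hx & Hy).
    assert (okt E x) by okt_sub (HDok _ Ht').
    assert (okt E y) by okt_sub (HDok _ Ht').
    apply r_blindL1 with x y; [split; auto | auto | apply IH1; auto |].
    apply IH2; auto; apply represents_cons; [apply represents_cons|]; auto.
  - apply acEq_Blind_inv in HT as (x & y & -> & Hx & Hy).
    apply r_blindR; [split; auto | apply IH1 | apply IH2]; auto; okt_sub HT'.
  - destruct (deriv_seq_ok E _ _ _ HdR) as [Hok _]; inversion Hok as [| ? ? [_ [_ Hn]]].
    eapply simulable_blindL2; eauto.
  - eapply simulable_gs; eauto.
Qed.

End Simulation.

Lemma cutfree_discharge_hyp (E : eqth) (D G : list (term (sym E))) (N M : term (sym E)) :
  Forall (okt E) D -> incl G D -> id_derivable E D N -> gsubterms_in E D N ->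
  cutfree E (N :: G) M -> cutfree E D M.
Proof.
  intros HD HGD Hid Hsub Hd.
  destruct (deriv_seq_ok E _ _ _ Hd) as [HNG HM].
  assert (HG : forall t, In t G -> represents E D t)
    by (intros t Ht; apply represents_member with t; auto; reflexivity).
  assert (Hdec : guarded E N \/ ~ guarded E N) by (destruct N; simpl; tauto).
  destruct Hdec as [HgN | HgN].
  - destruct (Hsub N (st_refl _ _) HgN) as (m & A' & Hm & HA'm & HNA').
    assert (HA' : okt E A').
    { apply okt_subterm with m; auto; rewrite Forall_forall in HD; auto. }
    apply r_gs with A'; [split; auto | eapply acEq_guarded; eauto | exists m; auto | |].
    + apply r_id; [split; auto|].
      apply id_derivable_eqE with N; auto; apply acEq_eqE; auto.
    + apply (cutfree_simulable E _ _ Hd); auto; [reflexivity |].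
      apply represents_cons; auto.
  - apply (cutfree_simulable E _ _ Hd); auto; [reflexivity |].
    intros t [<- | Ht]; auto; repeat split; auto; contradiction.
Qed.

Theorem lemma4 (E : eqth) (HE : valid_theory E)
  (G : list (term (sym E))) (Ms : list (term (sym E))) (C : ctx E)
  (M N : term (sym E)) :
  ctx_wf C -> length Ms = nholes C ->
  (forall m, In m Ms -> okt E m) ->
  is_nf E (fill C Ms) N ->
  cutfree E (N :: G) M ->
  cutfree E (Ms ++ G) M.
Proof.
  intros HC Hl HMs [Hrw _] Hd.
  assert (Hrules : forall l r, rules E l r ->
    (exists i, pure E i r) /\ (forall x, subterm E (Var x) r -> subterm E (Var x) l)).
  { destruct HE as (_ & _ & _ & Hshape & _).
    intros l r Hlr; destruct (Hshape l r Hlr) as [(i & _ & _ & Hr) (_ & _ & _ & Hvars)].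
    eauto. }
  destruct (deriv_seq_ok E _ _ _ Hd) as [HNG _]; inversion HNG as [| ? ? _ HG]; subst.
  apply cutfree_discharge_hyp with G N; auto.
  - apply Forall_app; split; auto; apply Forall_forall; auto.
  - apply incl_appr, incl_refl.
  - apply id_derivable_eqE with (fill C Ms); [| apply rstar_eqE; auto].
    exists C, Ms; repeat split; auto using in_or_app; reflexivity.
  - apply gsubterms_in_incl with Ms; [apply incl_appl, incl_refl |].
    apply gsubterms_in_rstar with (fill C Ms); auto using gsubterms_in_fill.
    intros m Hm; apply HMs; auto.
Qed.
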